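(* Let $A$ be a finite-dimensional local $k$-algebra with $A/J_A\cong k$, $X$ a finite-dimensional $(A,k)$-bimodule (with central $k$-action), and $\Lambda:=\begin{pmatrix}A&X\\0&k\end{pmatrix}$. Assume $(1,-1)\in K_0(\operatorname{proj}\Lambda)$ is rigid. (a) There exists $h\in X$ with $X=Ah$. (b) Let $\Lambda':=\begin{pmatrix}A&J_AX\\0&k\end{pmatrix}$ and $t\ge1$. If $(1,-t)\in K_0(\operatorname{proj}\Lambda)$ is rigid, then $(1,1-t)\in K_0(\operatorname{proj}\Lambda')$ is rigid.
   Context: $k$ a field, $J_A$ the Jacobson radical. $K_0(\operatorname{proj}\Lambda)$ is identified with $\mathbb{Z}^2$ via $[A\ X]\mapsto(1,0)$, $[0\ k]\mapsto(0,1)$ (similarly for $\Lambda'$). An element of $K_0(\operatorname{proj}\Lambda)$ is rigid if it equals the $g$-vector $[T^0]-[T^{-1}]$ of some 2-term presilting complex $T$ in $K^b(\operatorname{proj}\Lambda)$ (concentrated in degrees $-1,0$ with $\operatorname{Hom}(T,T[\ell])=0$ for all $\ell>0$). *)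

From HB Require Import structures.
From mathcomp Require Import all_boot all_order all_algebra all_field.
Set Implicit Arguments. Unset Strict Implicit. Unset Printing Implicit Defensive.
Import GRing.Theory.
Local Open Scope ring_scope.

Definition jac (k : fieldType) (A : falgType k) (x : A) : Prop :=
  forall a : A, (1 - a * x) \is a GRing.unit.

(* A is local with A / J_A = k : 1 is not in J_A (J_A proper) and the
   structure map k -> A / J_A is onto, i.e. A = k 1 + J_A. *)
Definition local_res_field (k : fieldType) (A : falgType k) : Prop :=
  ~ jac (1 : A) /\ forall a : A, exists c : k, jac (a - c%:A).

(* A finite-dimensional (A,k)-bimodule with central k-action:
   X is a finite-dimensional k-space (vectType), with a left A-action that is
   k-bilinear; the right k-action is the scalar action of X. *)
Record bimod (k : fieldType) (A : falgType k) (X : vectType k) := Bimod {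
  act : A -> X -> X;
  act1 : forall x, act 1 x = x;
  actM : forall a b x, act (a * b) x = act a (act b x);
  actDl : forall a b x, act (a + b) x = act a x + act b x;
  actDr : forall a x y, act a (x + y) = act a x + act a y;
  actZl : forall (c : k) a x, act (c *: a) x = c *: act a x;
  actZr : forall (c : k) a x, act a (c *: x) = c *: act a x
}.

Definition JX (k : fieldType) (A : falgType k) (X : vectType k) (M : bimod A X)
  (x : X) : Prop :=
  exists s : seq (A * X), (forall p, p \in s -> jac p.1) /\
    x = \sum_(p <- s) act M p.1 p.2.

Section Tri.
Variables (k : fieldType) (A : falgType k) (X : vectType k) (M : bimod A X).

(* Triangular algebra Lambda_V = [[A, V],[0, k]] for an A-k-sub-bimodule V of X
   (given by its membership predicate).  Indecomposable projective right
   modules: P1 = e1 Lambda = [A V], P2 = e2 Lambda = [0 k], with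
   Hom(P1,P1)=A, Hom(P2,P1)=V, Hom(P1,P2)=0, Hom(P2,P2)=k.
   A morphism P1^m (+) P2^n -> P1^m' (+) P2^n' is a block matrix. *)
Record hom (m n m' n' : nat) := Hom {
  hA : 'M[A]_(m', m);
  hX : 'M[X]_(m', n);
  hK : 'M[k]_(n', n)
}.

Definition hom_in (V : X -> Prop) m n m' n' (f : hom m n m' n') : Prop :=
  forall i j, V (hX f i j).

Definition hcomp m n m' n' m'' n'' (g : hom m' n' m'' n'') (f : hom m n m' n')
  : hom m n m'' n'' :=
  Hom (hA g *m hA f)
      (\matrix_(i, j) (\sum_(l < m') act M (hA g i l) (hX f l j)
                       + \sum_(l < n') hK f l j *: hX g i l))
      (hK g *m hK f).

Definition hadd m n m' n' (f g : hom m n m' n') : hom m n m' n' :=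
  Hom (hA f + hA g) (\matrix_(i, j) (hX f i j + hX g i j)) (hK f + hK g).

(* The 2-term complex T = (T^-1 --d--> T^0), T^-1 = P1^c (+) P2^d,
   T^0 = P1^a (+) P2^b, is presilting iff Hom_K(T, T[1]) = 0, i.e. every
   f : T^-1 -> T^0 is null-homotopic: f = d h1 + h0 d  (Hom(T,T[l]) = 0
   automatically for l >= 2). *)
Definition presilting (V : X -> Prop) a b c d (dT : hom c d a b) : Prop :=
  hom_in V dT /\
  forall f : hom c d a b, hom_in V f ->
    exists (h1 : hom c d c d) (h0 : hom a b a b),
      hom_in V h1 /\ hom_in V h0 /\
      f = hadd (hcomp dT h1) (hcomp h0 dT).

(* (e1, e2) in K_0(proj Lambda_V) = Z^2 is rigid iff it is the g-vector
   [T^0] - [T^-1] of a 2-term presilting complex. *)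
Definition rigid (V : X -> Prop) (e1 e2 : int) : Prop :=
  exists (a b c d : nat) (dT : hom c d a b),
    (a%:Z - c%:Z = e1) /\ (b%:Z - d%:Z = e2) /\ presilting V dT.

End Tri.

From Pilot Require Import Defs.
From HB Require Import structures.
From mathcomp Require Import all_boot all_order all_algebra all_field zify.
From Stdlib Require Import ClassicalEpsilon Classical.
Set Implicit Arguments. Unset Strict Implicit. Unset Printing Implicit Defensive.
Import GRing.Theory.
Local Open Scope ring_scope.

(* Write the presilting differential as a block matrix [dT = (alpha xi; 0 kappa)]
   from [P1^c (+) P2^(b+t)] to [P1^(c+1) (+) P2^b].  Every morphism between these is
   null-homotopic, which forces [kappa] to have full row rank and the residue of
   [alpha] to have full column rank; Gaussian elimination over the local ring [A]
   then shows that the left annihilator of [alpha] is [A u] for a row [u] with a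
   unit entry.  For a basis [C] of [ker kappa], the row [y := u xi C] of [X^t]
   satisfies [X^t = y M_t(k) + A y]; for [t = 1] this is (a).  For (b), a unipotent
   change of basis moves all entries of [y] but one, [y_p], into [J_A X].  If [y_p]
   is there as well, Nakayama gives [X = 0]; otherwise dropping [y_p] leaves [h]
   with [(J_A X)^(t-1) = h M_(t-1)(k) + A h], which is the presilting condition for
   the complex [h : P2^(t-1) -> P1] over [Lambda']. *)

Section Jacobson.
Variables (k : fieldType) (A : falgType k).

Lemma unitr1B_mulC (y z : A) :
  (1 - z * y) \is a GRing.unit -> (1 - y * z) \is a GRing.unit.
Proof.
case/unitrP=> w [wK Kw]; apply/unitrP; exists (1 + y * w * z); split.
- rewrite mulrDl mul1r.
  have -> : y * w * z * (1 - y * z) = y * (w * (1 - z * y)) * z.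
    by rewrite !(mulrBr, mulrBl) !(mulr1, mul1r) !mulrA.
  by rewrite wK mulr1 subrK.
- rewrite mulrDr mulr1.
  have -> : (1 - y * z) * (y * w * z) = y * ((1 - z * y) * w) * z.
    by rewrite !(mulrBr, mulrBl) !(mulr1, mul1r) !mulrA.
  by rewrite Kw mulr1 subrK.
Qed.

Lemma jac0 : jac (0 : A).
Proof. by move=> a; rewrite mulr0 subr0 unitr1. Qed.

Lemma jacD (x y : A) : jac x -> jac y -> jac (x + y).
Proof.
move=> Jx Jy a; have Ux := Jx a.
have -> : 1 - a * (x + y) = (1 - a * x) * (1 - ((1 - a * x)^-1 * a) * y).
  by rewrite mulrBr mulr1 !mulrA divrr // mul1r mulrDr opprD addrA.
by rewrite unitrMr.
Qed.

Lemma jacN (x : A) : jac x -> jac (- x).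
Proof. by move=> Jx a; rewrite mulrN -mulNr. Qed.

Lemma jacMl (b x : A) : jac x -> jac (b * x).
Proof. by move=> Jx a; rewrite mulrA. Qed.

Lemma jacMr (x b : A) : jac x -> jac (x * b).
Proof. by move=> Jx a; rewrite mulrA; apply: unitr1B_mulC; rewrite mulrA. Qed.

Lemma jacZ (c : k) (x : A) : jac x -> jac (c *: x).
Proof. by move=> Jx a; rewrite -scalerAr scalerAl. Qed.

Lemma jac_unit1B (j : A) : jac j -> (1 - j) \is a GRing.unit.
Proof. by move=> Jj; have := Jj 1; rewrite mul1r. Qed.

End Jacobson.

Section Residue.
Variables (k : fieldType) (A : falgType k) (Aloc : local_res_field A).

Definition residue (a : A) : k :=
  proj1_sig (constructive_indefinite_description _ (proj2 Aloc a)).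

Lemma residueP a : jac (a - (residue a)%:A).
Proof. by rewrite /residue; case: constructive_indefinite_description. Qed.

Lemma residue_uniq a c : jac (a - c%:A) -> residue a = c.
Proof.
move=> Jc; apply/eqP; apply: contraT => neq_ac.
have : jac ((residue a - c)^-1 *: (a - c%:A - (a - (residue a)%:A))).
  exact/jacZ/jacD/jacN/residueP.
have -> : a - c%:A - (a - (residue a)%:A) = (residue a - c)%:A.
  by rewrite opprB addrC addrA subrK scalerBl.
by rewrite scalerA mulVf ?scale1r ?subr_eq0 //; case: Aloc.
Qed.

Lemma residue_alg c : residue c%:A = c.
Proof. by apply: residue_uniq; rewrite subrr; apply: jac0. Qed.

Lemma residueB : zmod_morphism residue.
Proof.
move=> a b; apply: residue_uniq; rewrite scalerBl.
have -> : a - b - ((residue a)%:A - (residue b)%:A)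
          = (a - (residue a)%:A) + - (b - (residue b)%:A).
  by rewrite !opprB addrACA [RHS]addrACA [- _ + _]addrC.
by apply: jacD; [|apply: jacN]; apply: residueP.
Qed.

Lemma residueM : monoid_morphism residue.
Proof.
split; first by rewrite -[1]scale1r residue_alg.
move=> a b; apply: residue_uniq.
have := jacD (jacMr b (residueP a)) (jacZ (residue a) (residueP b)).
by rewrite mulrBl scalerBr scalerA -scalerAl mul1r addrA subrK.
Qed.

End Residue.

HB.instance Definition _ (k : fieldType) (A : falgType k) (Aloc : local_res_field A) :=
  GRing.isZmodMorphism.Build A k (residue Aloc) (residueB Aloc).
HB.instance Definition _ (k : fieldType) (A : falgType k) (Aloc : local_res_field A) :=
  GRing.isMonoidMorphism.Build A k (residue Aloc) (residueM Aloc).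

Section ResidueTheory.
Variables (k : fieldType) (A : falgType k) (Aloc : local_res_field A).
Local Notation res := (residue Aloc).

Lemma jac_residue a : res a = 0 -> jac a.
Proof. by move=> a0; have := residueP Aloc a; rewrite a0 scale0r subr0. Qed.

Lemma residue_unit a : res a != 0 -> a \is a GRing.unit.
Proof.
move=> nz_a; have -> : a = (res a)%:A * (1 - (- (res a)^-1)%:A * (a - (res a)%:A)).
  rewrite mulrBr mulr1 mulrA -scalerAl mul1r scalerA mulrN divff // scaleN1r.
  by rewrite mulN1r opprK addrC subrK.
rewrite unitrMr; first exact: residueP.
by apply/unitrP; exists (res a)^-1%:A; rewrite -!scalerAl !mul1r !scalerA mulVf ?divff ?scale1r.
Qed.

Lemma residueZ c a : res (c *: a) = c * res a.
Proof. by rewrite -mulr_algl rmorphM /= residue_alg. Qed.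

End ResidueTheory.

Lemma unit_entry_rinv (R : unitRingType) m (u : 'rV[R]_m) i :
  u 0 i \is a GRing.unit -> u *m (delta_mx i 0 *m (u 0 i)^-1%:M) = 1%:M.
Proof.
move=> ui; rewrite mulmxA -colE (_ : col i u = (u 0 i)%:M).
  by rewrite -scalar_mxM divrr.
by apply/matrixP => r l; rewrite !ord1 !mxE eqxx mulr1n.
Qed.

(* One step of Gaussian elimination at the unit pivot [P i0 0]: [row_ext] and
   [col_ext] identify the left and right null vectors of [P] with those of its
   Schur complement. *)
Section Elimination.
Variables (R : unitRingType) (c : nat) (P : 'M[R]_(c.+2, c.+1)) (i0 : 'I_c.+2).
Hypothesis pivot_unit : P i0 0 \is a GRing.unit.
Local Notation p := (P i0 0).

Definition schur_compl : 'M[R]_(c.+1, c) :=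
  \matrix_(i, j) (P (lift i0 i) (lift 0 j) - P (lift i0 i) 0 * p^-1 * P i0 (lift 0 j)).

Definition row_ext (w : 'rV[R]_c.+1) : 'rV[R]_c.+2 :=
  \row_i if unlift i0 i is Some i' then w 0 i'
         else - \sum_i' w 0 i' * P (lift i0 i') 0 * p^-1.

Definition col_ext (v : 'cV[R]_c) : 'cV[R]_c.+1 :=
  \col_j if unlift 0 j is Some j' then v j' 0
         else - (p^-1 * \sum_j' P i0 (lift 0 j') * v j' 0).

Lemma row'_col_ext v : row' 0 (col_ext v) = v.
Proof. by apply/matrixP => i j; rewrite !mxE liftK ord1. Qed.

Lemma row_extZ a w : row_ext (a *: w) = a *: row_ext w.
Proof.
apply/matrixP => i j; rewrite !mxE; case: unlift => [i'|]; first by rewrite mxE.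
by rewrite mulrN mulr_sumr; congr (- _); apply: eq_bigr => i' _; rewrite mxE !mulrA.
Qed.

Lemma row_ext_mulmxE w j :
  (row_ext w *m P) 0 j = if unlift 0 j is Some j' then (w *m schur_compl) 0 j' else 0.
Proof.
rewrite !mxE (bigD1_ord i0) //= !mxE unlift_none.
under eq_bigr do rewrite !mxE liftK.
case: unliftP => [j'|] -> /=.
  rewrite !mxE mulNr mulr_suml addrC -sumrB; apply: eq_bigr => i' _.
  by rewrite !mxE mulrBr !mulrA.
rewrite mulNr mulr_suml addrC; apply/eqP; rewrite subr_eq0; apply/eqP/eq_bigr => i _.
by rewrite divrK.
Qed.

Lemma mulmx_col_extE v i :
  (P *m col_ext v) i 0 = if unlift i0 i is Some i' then (schur_compl *m v) i' 0 else 0.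
Proof.
rewrite !mxE (bigD1_ord 0) //= !mxE unlift_none.
under eq_bigr do rewrite !mxE liftK.
case: unliftP => [i'|] -> /=.
  rewrite !mxE mulrN mulrA mulr_sumr addrC -sumrB; apply: eq_bigr => j' _.
  by rewrite !mxE mulrBl !mulrA.
by rewrite mulrN mulrA divrr // mul1r addNr.
Qed.

Lemma row_ext_mul_eq0 w : (row_ext w *m P == 0) = (w *m schur_compl == 0).
Proof.
apply/eqP/eqP => /matrixP wP; apply/matrixP => i j; rewrite ord1 [RHS]mxE.
  by have := wP 0 (lift 0 j); rewrite row_ext_mulmxE liftK => ->; rewrite mxE.
by rewrite row_ext_mulmxE; case: unlift => [j'|//]; rewrite wP mxE.
Qed.

Lemma mul_col_ext_eq0 v : (P *m col_ext v == 0) = (schur_compl *m v == 0).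
Proof.
apply/eqP/eqP => /matrixP Pv; apply/matrixP => i j; rewrite ord1 [RHS]mxE.
  by have := Pv (lift i0 i) 0; rewrite mulmx_col_extE liftK => ->; rewrite mxE.
by rewrite mulmx_col_extE; case: unlift => [i'|//]; rewrite Pv mxE.
Qed.

Lemma row_ext_col' w : w *m P = 0 -> row_ext (col' i0 w) = w.
Proof.
move=> /matrixP/(_ 0 0); rewrite !mxE (bigD1_ord i0) //= => /eqP; rewrite addr_eq0 => /eqP w0.
apply/matrixP => i j; rewrite ord1 mxE; case: unliftP => [i'|] -> //; first by rewrite mxE.
rewrite -[w 0 i0](mulrK pivot_unit) w0 mulNr mulr_suml.
by congr (- _); apply: eq_bigr => i' _; rewrite !mxE.
Qed.

End Elimination.

Section LeftAnnihilator.
Variables (k : fieldType) (A : falgType k) (Aloc : local_res_field A).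
Local Notation res := (residue Aloc).

Lemma map_schur_compl c (P : 'M[A]_(c.+2, c.+1)) i0 :
  P i0 0 \is a GRing.unit ->
  map_mx res (schur_compl P i0) = schur_compl (map_mx res P) i0.
Proof.
by move=> Pu; apply/matrixP => i j; rewrite !mxE rmorphB !rmorphM rmorphV.
Qed.

Lemma left_annihilator c (P : 'M[A]_(c.+1, c)) :
  (forall v : 'cV[k]_c, map_mx res P *m v = 0 -> v = 0) ->
  exists u : 'rV[A]_c.+1, exists2 i0, u 0 i0 \is a GRing.unit &
    u *m P = 0 /\ forall w, w *m P = 0 -> exists a, w = a *: u.
Proof.
elim: c P => [|c IHc] P Pinj.
  exists (const_mx 1), 0; first by rewrite mxE unitr1.
  split=> [|w _]; first by rewrite [_ *m _]thinmx0.
  by exists (w 0 0); apply/matrixP => i j; rewrite !ord1 !mxE mulr1.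
have [i0 pivot] : exists i0, res (P i0 0) != 0.
  apply/existsP; apply: contraT; rewrite negb_exists => /forallP P0.
  suff : (delta_mx 0 0 : 'cV[k]_c.+1) = 0.
    by move/matrixP/(_ 0 0); rewrite !mxE eqxx => /eqP; rewrite oner_eq0.
  apply: Pinj; rewrite -colE; apply/matrixP => i j.
  by rewrite !mxE; apply/eqP; have := P0 i; rewrite negbK.
have Pu : P i0 0 \is a GRing.unit by apply: residue_unit.
have Sinj : forall v : 'cV_c, map_mx res (schur_compl P i0) *m v = 0 -> v = 0.
  have Pu0 : map_mx res P i0 0 \is a GRing.unit by rewrite unitfE mxE.
  move=> v; rewrite map_schur_compl // => /eqP.
  rewrite -(mul_col_ext_eq0 Pu0) => /eqP /Pinj.
  move=> ext0; rewrite -[v](row'_col_ext (map_mx res P) i0) ext0.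
  by apply/matrixP => i j; rewrite !mxE.
have [u' [i0' u'_unit] [u'S annS]] := IHc _ Sinj.
exists (row_ext P i0 u'), (lift i0 i0'); first by rewrite mxE liftK.
split=> [|w wP]; first by apply/eqP; rewrite row_ext_mul_eq0 // u'S.
have /annS [a wa] : col' i0 w *m schur_compl P i0 = 0.
  by apply/eqP; rewrite -row_ext_mul_eq0 // row_ext_col' // wP.
by exists a; rewrite -(row_ext_col' Pu wP) wa row_extZ.
Qed.

End LeftAnnihilator.

Section HomotopicOnto.
Variable k : fieldType.

Definition homotopic_onto m n (K : 'M[k]_(m, n)) :=
  forall E : 'M[k]_(m, n), exists P Q, E = K *m P + Q *m K.

Lemma homotopic_onto_ker0 m n (K : 'M[k]_(m, n)) (u : 'rV_m) (w : 'cV_n) :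
  homotopic_onto K -> u *m K = 0 -> K *m w = 0 -> u = 0 \/ w = 0.
Proof.
move=> ontoK uK Kw; have [|/rV0Pn [i ui]] := eqVneq u 0; [by left | right].
apply/eqP; apply: contraT => /cV0Pn [j wj].
have [P [Q E]] := ontoK (delta_mx i j).
have : u *m delta_mx i j *m w = 0.
  by rewrite E mulmxDr mulmxDl !mulmxA uK !mul0mx add0r -!mulmxA Kw !mulmx0.
rewrite -(mul_delta_mx (0 : 'I_1)) mulmxA -colE -mulmxA -rowE => /matrixP/(_ 0 0).
by rewrite !mxE big_ord1 !mxE => /eqP; rewrite mulf_eq0 (negPf ui) (negPf wj).
Qed.

Lemma homotopic_onto_tr m n (K : 'M[k]_(m, n)) : homotopic_onto K -> homotopic_onto K^T.
Proof.
move=> ontoK E; have [P [Q EPQ]] := ontoK E^T.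
by exists Q^T, P^T; rewrite -[E]trmxK EPQ linearD /= !trmx_mul addrC.
Qed.

Lemma homotopic_onto_row_free m n (K : 'M[k]_(m, n)) :
  (m < n)%N -> homotopic_onto K -> row_free K.
Proof.
move=> lt_mn ontoK; have /rowV0Pn [v /sub_kermxP vK nz_v] : kermx K^T != 0.
  rewrite -mxrank_eq0 mxrank_ker mxrank_tr subn_eq0 -ltnNge.
  exact: leq_ltn_trans (rank_leq_row K) lt_mn.
have Kv : K *m v^T = 0 by rewrite -[K]trmxK -trmx_mul vK trmx0.
apply: inj_row_free => u uK; have [//|v0] := homotopic_onto_ker0 ontoK uK Kv.
by move: nz_v; rewrite -[v]trmxK v0 trmx0 eqxx.
Qed.

End HomotopicOnto.

Section KernelBasis.
Variable k : fieldType.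

Definition ker_basis m n (K : 'M[k]_(m, n)) : 'M[k]_(n, \rank (kermx K^T)) :=
  (row_base (kermx K^T))^T.

Lemma mulmx_ker_basis m n (K : 'M[k]_(m, n)) : K *m ker_basis K = 0.
Proof.
apply: trmx_inj; rewrite trmx_mul trmxK trmx0.
by apply/sub_kermxP; rewrite eq_row_base.
Qed.

Lemma ker_basis_linv m n (K : 'M[k]_(m, n)) : exists D, D *m ker_basis K = 1%:M.
Proof.
have /row_freeP [D baseD] := row_base_free (kermx K^T).
by exists D^T; rewrite -trmx_mul baseD trmx1.
Qed.

Lemma ker_basisP m n p (K : 'M[k]_(m, n)) (C : 'M_(n, p)) :
  K *m C = 0 -> exists L, C = ker_basis K *m L.
Proof.
move=> KC; have /submxP [L CL] : (C^T <= row_base (kermx K^T))%MS.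
  by rewrite eq_row_base; apply/sub_kermxP; rewrite -trmx_mul KC trmx0.
by exists L^T; rewrite -[C]trmxK CL trmx_mul.
Qed.

End KernelBasis.

Section BimoduleMatrices.
Variables (k : fieldType) (A : falgType k) (X : vectType k) (M : bimod A X).
Local Notation act := (act M).

Lemma act0l x : act 0 x = 0.
Proof. by have := actZl M 0 0 x; rewrite !scale0r. Qed.

Lemma act0r a : act a 0 = 0.
Proof. by have := actZr M 0 a 0; rewrite !scale0r. Qed.

Lemma act_sumr a (I : Type) (r : seq I) (P : pred I) (F : I -> X) :
  act a (\sum_(i <- r | P i) F i) = \sum_(i <- r | P i) act a (F i).
Proof. exact: (big_morph (act a) (actDr M a) (act0r a)). Qed.

Lemma act_suml x (I : Type) (r : seq I) (P : pred I) (F : I -> A) :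
  act (\sum_(i <- r | P i) F i) x = \sum_(i <- r | P i) act (F i) x.
Proof. exact: (big_morph (act^~ x) (fun a b => actDl M a b x) (act0l x)). Qed.

Lemma actBl a b x : act (a - b) x = act a x - act b x.
Proof. by rewrite actDl -scaleN1r actZl scaleN1r. Qed.

Lemma act_alg c x : act c%:A x = c *: x.
Proof. by rewrite actZl act1. Qed.

Definition mxact m n p (P : 'M[A]_(m, n)) (Z : 'M[X]_(n, p)) : 'M[X]_(m, p) :=
  \matrix_(i, j) \sum_l act (P i l) (Z l j).

Definition mxscale m n p (Z : 'M[X]_(m, n)) (K : 'M[k]_(n, p)) : 'M[X]_(m, p) :=
  \matrix_(i, j) \sum_l K l j *: Z i l.

Lemma hX_hcomp m n m' n' m'' n'' (g : Defs.hom A X m' n' m'' n'') (f : Defs.hom A X m n m' n') :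
  hX (hcomp M g f) = mxact (hA g) (hX f) + mxscale (hX g) (hK f).
Proof. by apply/matrixP => i j; rewrite !mxE. Qed.

Lemma hX_hadd m n m' n' (f g : Defs.hom A X m n m' n') : hX (hadd f g) = hX f + hX g.
Proof. by apply/matrixP => i j; rewrite !mxE. Qed.

Lemma hom_eq m n m' n' (f g : Defs.hom A X m n m' n') :
  hA f = hA g -> hX f = hX g -> hK f = hK g -> f = g.
Proof. by case: f g => [? ? ?] [? ? ?] /= -> -> ->. Qed.

Lemma mxactA m n p q (P : 'M[A]_(m, n)) (Q : 'M[A]_(n, p)) (Z : 'M[X]_(p, q)) :
  mxact P (mxact Q Z) = mxact (P *m Q) Z.
Proof.
apply/matrixP => i j; rewrite !mxE.
under eq_bigr do rewrite mxE act_sumr.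
rewrite exchange_big; apply: eq_bigr => r _.
by rewrite mxE act_suml; apply: eq_bigr => l _; rewrite actM.
Qed.

Lemma mxscaleA m n p q (Z : 'M[X]_(m, n)) (K : 'M[k]_(n, p)) (L : 'M[k]_(p, q)) :
  mxscale (mxscale Z K) L = mxscale Z (K *m L).
Proof.
apply/matrixP => i j; rewrite !mxE.
under eq_bigr do rewrite mxE scaler_sumr.
rewrite exchange_big; apply: eq_bigr => l _.
by rewrite mxE scaler_suml; apply: eq_bigr => r _; rewrite scalerA mulrC.
Qed.

Lemma mxact_mxscale m n p q (P : 'M[A]_(m, n)) (Z : 'M[X]_(n, p)) (K : 'M[k]_(p, q)) :
  mxact P (mxscale Z K) = mxscale (mxact P Z) K.
Proof.
apply/matrixP => i j; rewrite !mxE.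
under eq_bigr do rewrite mxE act_sumr.
rewrite exchange_big; apply: eq_bigr => l _.
by rewrite mxE scaler_sumr; apply: eq_bigr => r _; rewrite actZr.
Qed.

Lemma mxactDr m n p (P : 'M[A]_(m, n)) (Z1 Z2 : 'M[X]_(n, p)) :
  mxact P (Z1 + Z2) = mxact P Z1 + mxact P Z2.
Proof.
by apply/matrixP => i j; rewrite !mxE -big_split; apply: eq_bigr => l _; rewrite mxE actDr.
Qed.

Lemma mxscaleDl m n p (Z1 Z2 : 'M[X]_(m, n)) (K : 'M[k]_(n, p)) :
  mxscale (Z1 + Z2) K = mxscale Z1 K + mxscale Z2 K.
Proof.
by apply/matrixP => i j; rewrite !mxE -big_split; apply: eq_bigr => l _; rewrite mxE scalerDr.
Qed.

Lemma mxscaleBr m n p (Z : 'M[X]_(m, n)) (K1 K2 : 'M[k]_(n, p)) :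
  mxscale Z (K1 - K2) = mxscale Z K1 - mxscale Z K2.
Proof.
by apply/matrixP => i j; rewrite !mxE -sumrB; apply: eq_bigr => l _; rewrite !mxE scalerBl.
Qed.

Lemma mxact_scalar_mx m p (a : A) (Z : 'M[X]_(m, p)) : mxact a%:M Z = map_mx (act a) Z.
Proof.
apply/matrixP => i j; rewrite !mxE (bigD1 i) //= big1 => [|l /negPf il].
  by rewrite mxE eqxx mulr1n addr0.
by rewrite mxE eq_sym il mulr0n act0l.
Qed.

Lemma mxact0l m n p (Z : 'M[X]_(n, p)) : mxact (0 : 'M_(m, n)) Z = 0.
Proof. by apply/matrixP => i j; rewrite !mxE big1 // => l _; rewrite mxE act0l. Qed.

Lemma mxscale0l m n p (K : 'M[k]_(n, p)) : mxscale (0 : 'M[X]_(m, n)) K = 0.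
Proof. by apply/matrixP => i j; rewrite !mxE big1 // => l _; rewrite mxE scaler0. Qed.

Lemma mxscale0r m n p (Z : 'M[X]_(m, n)) : mxscale Z (0 : 'M_(n, p)) = 0.
Proof. by apply/matrixP => i j; rewrite !mxE big1 // => l _; rewrite mxE scale0r. Qed.

Lemma mxscale1 n p (Z : 'M[X]_(p, n)) : mxscale Z 1%:M = Z.
Proof.
apply/matrixP => i j; rewrite !mxE (bigD1 j) //= big1 => [|l /negPf jl].
  by rewrite mxE eqxx scale1r addr0.
by rewrite mxE jl scale0r.
Qed.

Lemma mxact1 n p (Z : 'M[X]_(n, p)) : mxact 1%:M Z = Z.
Proof.
apply/matrixP => i j; rewrite !mxE (bigD1 i) //= big1 => [|l /negPf il].
  by rewrite mxE eqxx act1 addr0.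
by rewrite mxE eq_sym il act0l.
Qed.

End BimoduleMatrices.

Section RadicalSubmodule.
Variables (k : fieldType) (A : falgType k) (X : vectType k) (M : bimod A X).
Local Notation act := (act M).
Local Notation JX := (JX M).

Lemma JX0 : JX 0.
Proof. by exists [::]; rewrite big_nil. Qed.

Lemma JXD x y : JX x -> JX y -> JX (x + y).
Proof.
move=> [s [Js ->]] [s' [Js' ->]]; exists (s ++ s'); rewrite big_cat; split=> // p.
by rewrite mem_cat => /orP [/Js|/Js'].
Qed.

Lemma JX_act a x : JX x -> JX (act a x).
Proof.
move=> [s [Js ->]]; exists [seq (a * p.1, p.2) | p <- s]; split.
  by move=> _ /mapP [p /Js Jp ->]; apply: jacMl.
by rewrite act_sumr big_map; apply: eq_bigr => p _; rewrite actM.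
Qed.

Lemma JXZ c x : JX x -> JX (c *: x).
Proof. by rewrite -(act_alg M); apply: JX_act. Qed.

Lemma JXB x y : JX x -> JX y -> JX (x - y).
Proof. by move=> Jx Jy; rewrite -scaleN1r; apply/JXD/JXZ. Qed.

Lemma JX_sum (I : Type) (r : seq I) (F : I -> X) :
  (forall i, JX (F i)) -> JX (\sum_(i <- r) F i).
Proof. by move=> JF; elim/big_ind: _ => //; [apply: JX0 | apply: JXD]. Qed.

Lemma JX_jac j x : jac j -> JX (act j x).
Proof.
by move=> Jj; exists [:: (j, x)]; rewrite big_seq1; split=> // p; rewrite inE => /eqP ->.
Qed.

Variable h : X.
Hypothesis h_gen : forall x, exists a, x = act a h.

Lemma JX_generator x : JX x -> exists2 j, jac j & x = act j h.
Proof.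
move=> [s [Js ->]]; elim: s Js => [|[j y] s IHs] Js.
  by exists 0; [apply: jac0 | rewrite big_nil act0l].
rewrite big_cons; have [|j' Jj' ->] := IHs.
  by move=> p sp; apply: Js; rewrite inE sp orbT.
have [b ->] := h_gen y; exists (j * b + j'); last by rewrite actDl actM.
by apply: jacD => //; apply: jacMr; apply: (Js _ (mem_head _ _)).
Qed.

Lemma JX_generator_eq0 : JX h -> h = 0.
Proof.
move=> /JX_generator [j /jac_unit1B Uj hj].
have h0 : act (1 - j) h = 0 by rewrite actBl act1 -hj subrr.
by rewrite -[h](act1 M) -(mulVr Uj) actM h0 act0r.
Qed.

End RadicalSubmodule.

Section Spanning.
Variables (k : fieldType) (A : falgType k) (X : vectType k) (M : bimod A X).
Local Notation act := (act M).
Local Notation mxact := (mxact M).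

(* For the complex [P2^s -> P1] with differential [y], this is its presilting
   condition. *)
Definition spans (V : X -> Prop) s (y : 'rV[X]_s) :=
  forall z : 'rV[X]_s, (forall j, V (z 0 j)) ->
    exists (a : A) (L : 'M[k]_s), z = mxscale y L + mxact a%:M y.

Lemma spans_mxscale_unit s (y : 'rV[X]_s) G :
  G \in unitmx -> spans (fun _ => True) y -> spans (fun _ => True) (mxscale y G).
Proof.
move=> Gu yspan x _; have [a [L xG]] := yspan (mxscale x (invmx G)) (fun _ => I).
exists a, (invmx G *m L *m G).
rewrite -[x]mxscale1 -(mulVmx Gu) -mxscaleA xG mxscaleDl mxact_mxscale.
by rewrite !mxscaleA !mulmxA mulmxV // mul1mx.
Qed.

Lemma rigid_of_spans (V : X -> Prop) s (y : 'rV[X]_s) :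
  (forall j, V (y 0 j)) -> spans V y -> rigid M V 1 (- s%:Z).
Proof.
move=> yV yspan; exists 1%N, 0%N, 0%N, s, (Defs.Hom 0 y 0 : Defs.hom A X 0 s 1 0).
split; first by rewrite subr0.
split; first by rewrite sub0r.
split=> [i j|f fV]; first by rewrite ord1.
have [a [L fy]] := yspan (hX f) (fV 0).
exists (Defs.Hom 0 0 L), (Defs.Hom a%:M 0 0); split=> [[] //|]; split=> [? [] //|].
apply: hom_eq; [by rewrite [LHS]thinmx0 [RHS]thinmx0 | | by rewrite [LHS]flatmx0 [RHS]flatmx0].
by rewrite hX_hadd !hX_hcomp /= fy mxact0l mxscale0r add0r addr0.
Qed.

Lemma rigid_of_trivial (V : X -> Prop) s :
  V 0 -> (forall x : X, x = 0) -> rigid M V 1 (- s%:Z).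
Proof.
move=> V0 X0; apply: (@rigid_of_spans V s 0) => [j|z _]; first by rewrite mxE.
by exists 0, 0; apply/matrixP => i j; rewrite [LHS]X0 [RHS]X0.
Qed.

Lemma spans1_generator (y : 'rV[X]_1) :
  spans (fun _ => True) y -> forall x, exists a, x = act a (y 0 0).
Proof.
move=> yspan x; have [a [L /matrixP/(_ 0 0)]] := yspan (const_mx x) (fun _ => I).
rewrite mxact_scalar_mx !mxE big_ord1 => ->.
by exists ((L 0 0)%:A + a); rewrite actDl act_alg.
Qed.

Lemma spans_JX s (y : 'rV[X]_s.+1) :
  spans (fun _ => True) y -> (forall j, JX M (y 0 j)) -> forall x, JX M x.
Proof.
move=> yspan yJ x; have [a [L /matrixP/(_ 0 0)]] := yspan (const_mx x) (fun _ => I).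
rewrite mxact_scalar_mx !mxE => ->.
by apply: JXD; [apply: JX_sum => l; apply: JXZ | apply: JX_act].
Qed.

Lemma spans_drop s (y : 'rV[X]_s.+1) p :
  spans (fun _ => True) y -> ~ JX M (y 0 p) -> (forall j, j != p -> JX M (y 0 j)) ->
  spans (JX M) (col' p y).
Proof.
move=> yspan yp yJ z zJ.
pose z' : 'rV[X]_s.+1 := \row_i if unlift p i is Some j then z 0 j else 0.
have [a [L /matrixP zL]] := yspan z' (fun _ => I).
exists a, (row' p (col' p L)); apply/matrixP => i j; rewrite ord1.
have := zL 0 (lift p j); rewrite mxact_scalar_mx !mxE liftK (bigD1_ord p) //=.
set r := \sum_(l < s) _; move=> zj.
have Lp0 : L p (lift p j) = 0.
  apply/eqP; apply: contraT => nzL; case: yp.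
  have -> : y 0 p = (L p (lift p j))^-1 *: (z 0 j - (r + act a (y 0 (lift p j)))).
    by rewrite zj -[X in X - _]addrA addrK scalerA mulVf // scale1r.
  have yJ' l : JX M (y 0 (lift p l)) by apply: yJ; rewrite eq_sym neq_lift.
  by apply/JXZ/JXB/JXD; [apply: zJ | apply: JX_sum => l; apply: JXZ | apply: JX_act].
rewrite zj Lp0 scale0r add0r big_ord1 !mxE mulr1n; congr (_ + _).
by apply: eq_bigr => l _; rewrite !mxE.
Qed.

End Spanning.

Section Rebase.
Variables (k : fieldType) (A : falgType k) (X : vectType k) (M : bimod A X).
Variable Aloc : local_res_field A.
Local Notation act := (act M).
Local Notation res := (residue Aloc).

(* [1 - N] replaces [y_j] by [y_j - (res g_j / res g_p) y_p], which lies in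
   [J_A X]; as [N^2 = 0], it is invertible. *)
Lemma spans_rebase h s (y : 'rV[X]_s.+1) p :
  (forall x, exists a, x = act a h) -> spans M (fun _ => True) y -> ~ JX M (y 0 p) ->
  exists y' : 'rV[X]_s.+1,
    [/\ spans M (fun _ => True) y', ~ JX M (y' 0 p) & forall j, j != p -> JX M (y' 0 j)].
Proof.
move=> h_gen yspan yp.
have [g yg] := fin_all_exists (fun l => h_gen (y 0 l)).
have gp : res (g p) != 0.
  by apply/eqP => /jac_residue Jg; apply: yp; rewrite yg; apply: JX_jac.
pose N : 'M[k]_s.+1 := \matrix_(l, j) if (l == p) && (j != p) then res (g j) / res (g p) else 0.
have NN : N *m N = 0.
  apply/matrixP => l j; rewrite !mxE big1 // => r _; rewrite !mxE.
  by have [->|/negPf rp] := eqVneq r p; rewrite ?eqxx ?andbF ?mul0r ?rp ?mulr0.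
have Gu : 1%:M - N \in unitmx.
  have GG : (1%:M - N) *m (1%:M + N) = 1%:M.
    by rewrite mulmxDr mulmx1 mulmxBl mul1mx NN subr0 subrK.
  by case: (mulmx1_unit GG).
have y'E j : mxscale y (1%:M - N) 0 j = y 0 j - N p j *: y 0 p.
  rewrite mxscaleBr mxscale1 [in LHS]mxE [in LHS]mxE; congr (_ - _).
  by rewrite mxE (bigD1 p) //= big1 ?addr0 // => l /negPf lp; rewrite mxE lp scale0r.
exists (mxscale y (1%:M - N)); split.
- exact: spans_mxscale_unit.
- by rewrite y'E mxE eqxx andbF scale0r subr0.
move=> j jp; rewrite y'E mxE eqxx jp /= (yg j) (yg p) -actZl -actBl.
apply/JX_jac/jac_residue.
by rewrite rmorphB /= residueZ divfK // subrr.
Qed.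

End Rebase.

Section SpanningFromPresilting.
Variables (k : fieldType) (A : falgType k) (X : vectType k) (M : bimod A X).
Variable Aloc : local_res_field A.
Local Notation res := (residue Aloc).
Local Notation mxact := (mxact M).

Section Presilting.
Variables (a b c d : nat) (dT : Defs.hom A X c d a b).
Hypothesis dT_pre : presilting M (fun _ => True) dT.

Lemma presilting_homotopic_hK : homotopic_onto (hK dT).
Proof.
move=> E; have [h1 [h0 [_ [_ /(congr1 (@hK _ _ _ _ _ _ _)) /= EK]]]] :=
  dT_pre.2 (Defs.Hom 0 0 E) (fun _ _ => I).
by exists (hK h1), (hK h0).
Qed.

Lemma presilting_homotopic_res : homotopic_onto (map_mx res (hA dT)).
Proof.
move=> E; have [h1 [h0 [_ [_ /(congr1 (@hA _ _ _ _ _ _ _)) /= EA]]]] :=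
  dT_pre.2 (Defs.Hom (map_mx (in_alg A) E) 0 0) (fun _ _ => I).
exists (map_mx res (hA h1)), (map_mx res (hA h0)).
rewrite -!map_mxM -map_mxD -EA; apply/matrixP => i j; rewrite !mxE.
exact/esym/residue_alg.
Qed.

Variables (s : nat) (u : 'rV[A]_a) (E : 'cV[A]_a) (C : 'M[k]_(d, s)) (D : 'M[k]_(s, d)).
Hypotheses (uE : u *m E = 1%:M) (uA : u *m hA dT = 0).
Hypothesis u_ann : forall w, w *m hA dT = 0 -> exists a0, w = a0 *: u.
Hypotheses (KC : hK dT *m C = 0) (DC : D *m C = 1%:M).
Hypothesis C_ker : forall L : 'M_(d, s), hK dT *m L = 0 -> exists L', L = C *m L'.

(* With [y := u (hX dT) C], the map [Z |-> u Z C] sends [hX (dT h1 + h0 dT)] to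
   [y L + a0 y], because [u] kills [hA dT] and [C] kills [hK dT]; it is onto since
   [u E = 1] and [D C = 1]. *)
Lemma presilting_spans : spans M (fun _ => True) (mxscale (mxact u (hX dT)) C).
Proof.
move=> x _; pose Z := mxact E (mxscale x D).
have [h1 [h0 [_ [_ fE]]]] := dT_pre.2 (Defs.Hom 0 Z 0) (fun _ _ => I).
have /= EA := congr1 (@hA _ _ _ _ _ _ _) fE.
have /= EK := congr1 (@hK _ _ _ _ _ _ _) fE.
have EX := congr1 (@hX _ _ _ _ _ _ _) fE; rewrite hX_hadd !hX_hcomp /= in EX.
have [a0 ua0] : exists a0, u *m hA h0 = a0 *: u.
  apply: u_ann; rewrite -mulmxA (_ : hA h0 *m hA dT = - (hA dT *m hA h1)).
    by rewrite mulmxN mulmxA uA mul0mx oppr0.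
  by apply/eqP; rewrite -addr_eq0 addrC -EA.
have [L h1L] : exists L, hK h1 *m C = C *m L.
  apply: C_ker; rewrite mulmxA (_ : hK dT *m hK h1 = - (hK h0 *m hK dT)).
    by rewrite mulNmx -mulmxA KC mulmx0 oppr0.
  by apply/eqP; rewrite -addr_eq0 -EK.
exists a0, L.
have -> : x = mxscale (mxact u Z) C by rewrite mxactA uE mxact1 mxscaleA DC mxscale1.
rewrite EX !mxactDr !mxactA uA mxact0l ua0 -mul_scalar_mx -mxactA !mxact_mxscale.
by rewrite !mxscaleDl !mxscaleA h1L KC mxscale0l mxscale0r add0r addr0.
Qed.

End Presilting.

Lemma rigid_spans t : (0 < t)%N -> rigid M (fun _ => True) 1 (- t%:Z) ->
  exists y : 'rV[X]_t, spans M (fun _ => True) y.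
Proof.
move=> t_gt0 [a [b [c [d [dT [ac [bd dT_pre]]]]]]].
have ea : a = c.+1 by lia.
have ed : d = (b + t)%N by lia.
subst a d.
have K_free : row_free (hK dT).
  apply: homotopic_onto_row_free (presilting_homotopic_hK dT_pre).
  by rewrite -{1}[b]addn0 ltn_add2l.
have res_inj : forall v : 'cV_c, map_mx res (hA dT) *m v = 0 -> v = 0.
  have := homotopic_onto_tr (presilting_homotopic_res dT_pre).
  move=> /(homotopic_onto_row_free (ltnSn c)) free v Pv; apply/eqP.
  by rewrite -trmx_eq0 -(mulmx_free_eq0 _ free) -trmx_mul Pv trmx0.
have [u [i0 u_unit] [uA u_ann]] := left_annihilator res_inj.
have [D DC] := ker_basis_linv (hK dT).
have <- : \rank (kermx (hK dT)^T) = t by rewrite mxrank_ker mxrank_tr (eqP K_free) addKn.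
exists (mxscale (mxact u (hX dT)) (ker_basis (hK dT))).
exact: (presilting_spans dT_pre (unit_entry_rinv u_unit) uA u_ann
          (mulmx_ker_basis _) DC (@ker_basisP _ _ _ _ _)).
Qed.

End SpanningFromPresilting.

Unset Implicit Arguments.

Theorem lemma3p15 (k : fieldType) (A : falgType k) (X : vectType k)
  (M : bimod A X) (Hloc : local_res_field A)
  (Hrig : rigid M (fun _ => True) 1 (-1)) :
  (exists h : X, forall x : X, exists a : A, x = act M a h) /\
  (forall t : nat, (1 <= t)%N ->
     rigid M (fun _ => True) 1 (- t%:Z) ->
     rigid M (JX M) 1 (1 - t%:Z)).
Proof.
have [h h_gen] : exists h : X, forall x : X, exists a : A, x = act M a h.
  have [y yspan] := rigid_spans Hloc (ltn0Sn 0) Hrig.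
  by exists (y 0 0); apply: spans1_generator.
split=> [|[//|t] _ /(rigid_spans Hloc (ltn0Sn t)) [y yspan]]; first by exists h.
have -> : 1 - t.+1%:Z = - t%:Z by lia.
have [yJ|/not_all_ex_not [p yp]] := classic (forall j, JX M (y 0 j)).
  apply: rigid_of_trivial => [|x]; first exact: JX0.
  have [a ->] := h_gen x.
  by rewrite (JX_generator_eq0 h_gen (spans_JX yspan yJ h)) act0r.
have [y' [y'span y'p y'J]] := spans_rebase Hloc h_gen yspan yp.
apply: rigid_of_spans (spans_drop y'span y'p y'J) => j.
by rewrite mxE; apply: y'J; rewrite eq_sym neq_lift.
Qed.
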